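(* Let $n\geq 4$ and let $Q$ be a regular $n$-gon. Then there exists a (symmetric) bilinear form $B$ on $X_Q^*$ such that $B([\psi_d],[\psi_{d'}])>0$ for all $d,d'\in\mathrm{Diag}_n$ that do not cross (including $d=d'$); i.e. $\Sigma_Q$ satisfies: $B(f_1^\perp,f_2^\perp)>0$ whenever facets $f_1,f_2$ of $\Sigma_Q$ share a vertex.
   Context: Let $Q$ be a convex $n$-gon in $\mathbb{R}^2$ with vertices $p_1,\dots,p_n$ in cyclic order; identify $p_i$ with label $i$, so triangulations of $Q$ (using only vertices of $Q$) are identified with elements of $\mathcal{T}_n$ (each triangulation identified with its set of diagonals) and diagonals with elements of $\mathrm{Diag}_n=\{\{i,j\}\subseteq[n]: i-j\not\equiv\pm1 \pmod n\}$. Two diagonals cross if they meet in the interior of $Q$. Let $X_Q$ be the space of formal combinations $\sum_{p\in V(Q)} c_p\cdot p$ with $\sum_p c_p=0$ and $\sum_p c_p p=0$ in $\mathbb{R}^2$; let $X_Q^*$ be the space of functions $V(Q)\to\mathbb{R}$ modulo restrictions of affine functions $\mathbb{R}^2\to\mathbb{R}$, with pairing $\langle[\psi],\sum_p c_p\cdot p\rangle=\sum_p c_p\psi(p)$. For a triangulation $T$ let $v_T=(\operatorname{area}(Q_{T,p}))_{p\in V(Q)}$ where $Q_{T,p}$ is the union of the triangles of $T$ having $p$ as a vertex. The secondary polytope $\Sigma_Q$ is the convex hull of the $v_T$, translated to lie in $X_Q$. It is known (Gelfand–Kapranov–Zelevinsky) that $\Sigma_Q$ is a full-dimensional polytope in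 the $(n-3)$-dimensional space $X_Q$ realizing the associahedron: its vertices are exactly the points $v_T$, $T\in\mathcal{T}_n$; its facets are $f_d$, $d\in\mathrm{Diag}_n$, where $f_d$ contains $v_T$ iff $d\in T$; and an outward normal of $f_d$ is $f_d^\perp=[\psi_d]$, where $\psi_d=\min(\ell_d,0)$ restricted to $V(Q)$ and $\ell_d$ is any nonzero affine function vanishing at both endpoints of $d$. Two facets $f_d,f_{d'}$ share a vertex iff $d,d'$ do not cross. *)

From HB Require Import structures.
From mathcomp Require Import all_boot all_order all_algebra.
From mathcomp Require Import reals trigo.
Set Implicit Arguments. Unset Strict Implicit. Unset Printing Implicit Defensive.
Import Order.TTheory GRing.Theory Num.Theory.
Local Open Scope ring_scope.

Section Polygon.
Variables (R : realType) (n : nat).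

Definition vx (k : 'I_n) : R := cos (2 * pi * k%:R / n%:R).
Definition vy (k : 'I_n) : R := sin (2 * pi * k%:R / n%:R).

Definition is_diag (i j : 'I_n) : bool :=
  [&& (i < j)%N, (j - i != 1)%N & (j - i != n.-1)%N].

(* Two (distinct) diagonals cross iff they meet in the interior of Q; for a
   strictly convex polygon this means their relatively open segments meet. *)
Definition cross (i j k l : 'I_n) : Prop :=
  (i, j) <> (k, l) /\
  exists t s : R, [/\ 0 < t < 1, 0 < s < 1,
    (1 - t) * vx i + t * vx j = (1 - s) * vx k + s * vx l &
    (1 - t) * vy i + t * vy j = (1 - s) * vy k + s * vy l].

(* ell_d: a nonzero affine function vanishing at p_i and p_j. *)
Definition ell (i j k : 'I_n) : R :=
  (vx j - vx i) * (vy k - vy i) - (vy j - vy i) * (vx k - vx i).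

(* psi_d = min(ell_d, 0) restricted to V(Q), as a row vector indexed by labels. *)
Definition psi (i j : 'I_n) : 'rV[R]_n := \row_k Num.min (ell i j k) 0.

Definition is_affine (a : 'rV[R]_n) : Prop :=
  exists c0 c1 c2 : R, forall k, a 0 k = c0 + c1 * vx k + c2 * vy k.

Definition bform (M : 'M[R]_n) (f g : 'rV[R]_n) : R := (f *m M *m g^T) 0 0.

End Polygon.

From mathcomp Require Import all_boot all_order all_algebra.
From mathcomp Require Import reals trigo.
From mathcomp Require Import ring lra zify.
Set Implicit Arguments. Unset Strict Implicit. Unset Printing Implicit Defensive.
Import Order.TTheory GRing.Theory Num.Theory.
Local Open Scope ring_scope.

(* The form has Gram matrix J + a I + b (S + S^T), with J the all-ones matrix and S
   the cyclic shift of the vertices; a and b are chosen so that affine functions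
   lie in its kernel, which makes it a form on X_Q^*.  Since min(ell, 0) and
   min(-ell, 0) differ by the affine function ell, the normal of the facet f_d is
   represented by a nonpositive function supported on either side of d, as we
   please.  For two non-crossing diagonals one can choose the sides so that the
   two supports are at cyclic distance at least 2, where every entry of the Gram
   matrix is 1; the form is then a sum of nonnegative terms, one of them
   positive. *)

Section Trigonometry.
Variable R : realType.

Lemma cosDB (x y : R) : cos (x + y) - cos (x - y) = -2 * sin x * sin y.
Proof. by rewrite cosD cosB; ring. Qed.

Lemma sinDB (x y : R) : sin (x + y) - sin (x - y) = 2 * cos x * sin y.
Proof. by rewrite sinD sinB; ring. Qed.

Lemma chord_det (a b c : R) :
  (cos b - cos a) * (sin c - sin a) - (sin b - sin a) * (cos c - cos a)
  = -4 * sin ((b - a) / 2) * sin ((c - a) / 2) * sin ((b - c) / 2).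
Proof.
have -> : cos b - cos a = -2 * sin ((b + a) / 2) * sin ((b - a) / 2).
  by rewrite -cosDB; congr (cos _ - cos _); lra.
have -> : sin c - sin a = 2 * cos ((c + a) / 2) * sin ((c - a) / 2).
  by rewrite -sinDB; congr (sin _ - sin _); lra.
have -> : sin b - sin a = 2 * cos ((b + a) / 2) * sin ((b - a) / 2).
  by rewrite -sinDB; congr (sin _ - sin _); lra.
have -> : cos c - cos a = -2 * sin ((c + a) / 2) * sin ((c - a) / 2).
  by rewrite -cosDB; congr (cos _ - cos _); lra.
have -> : (b - c) / 2 = (b + a) / 2 - (c + a) / 2 by lra.
by rewrite sinB; ring.
Qed.

End Trigonometry.

Lemma rotation_fixed_eq0 (R : realFieldType) (c s x y : R) : c < 1 ->
  x = x * c - y * s -> y = y * c + x * s -> x = 0 /\ y = 0.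
Proof.
move=> c_lt1 ex ey.
have d_gt0 : 0 < (1 - c) ^+ 2 + s ^+ 2.
  by rewrite ltr_pwDl ?sqr_ge0 // exprn_gt0 // subr_gt0.
have ex' : ((1 - c) ^+ 2 + s ^+ 2) * x = 0.
  transitivity ((1 - c) * (x - (x * c - y * s)) - s * (y - (y * c + x * s))); first by ring.
  by rewrite -ex -ey !subrr !mulr0 subrr.
have ey' : ((1 - c) ^+ 2 + s ^+ 2) * y = 0.
  transitivity ((1 - c) * (y - (y * c + x * s)) + s * (x - (x * c - y * s))); first by ring.
  by rewrite -ex -ey !subrr !mulr0 addr0.
by move/eqP: ex'; move/eqP: ey'; rewrite !mulf_eq0 gt_eqF //= => /eqP-> /eqP->.
Qed.

Lemma subr_neq0_of_mul_lt0 (R : realDomainType) (a b : R) : a * b < 0 -> a - b != 0.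
Proof. by apply: contraTneq => /subr0_eq->; rewrite -expr2 -leNgt sqr_ge0. Qed.

Lemma sign_change_ratio_in01 (R : realFieldType) (a b : R) :
  a * b < 0 -> 0 < a / (a - b) < 1.
Proof.
move=> ab; have d_gt0 : 0 < a ^+ 2 - a * b by rewrite subr_gt0 (lt_le_trans ab) ?sqr_ge0.
have a_neq0 : a != 0 by apply: contraTneq ab => ->; rewrite mul0r ltxx.
have ab_neq0 := subr_neq0_of_mul_lt0 ab.
have -> : a / (a - b) = a ^+ 2 / (a ^+ 2 - a * b) by field; rewrite -mulrBr mulf_neq0.
by rewrite divr_gt0 ?exprn_even_gt0 // ltr_pdivrMr // mul1r; lra.
Qed.

Lemma sumr_gt0_of (R : numDomainType) (I : finType) (F : I -> R) i :
  (forall j, 0 <= F j) -> 0 < F i -> 0 < \sum_j F j.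
Proof. by move=> F_ge0 Fi_gt0; rewrite (bigD1 i) //= ltr_pwDl // sumr_ge0. Qed.

Lemma sum_mul_delta (R : pzSemiRingType) (I : finType) (F : I -> R) i :
  \sum_j F j * (j == i)%:R = F i.
Proof. by rewrite (bigD1 i) //= eqxx mulr1 big1 ?addr0 // => j /negbTE->; rewrite mulr0. Qed.

Section BilinearForm.
Variables (R : realType) (n : nat).
Implicit Types (M : 'M[R]_n) (u v w : 'rV[R]_n).

Lemma bformE M u v : bform M u v = \sum_l \sum_k u 0 k * M k l * v 0 l.
Proof.
rewrite /bform mxE; apply: eq_bigr => l _; rewrite !mxE mulr_suml.
by apply: eq_bigr.
Qed.

Lemma bformBl M u v w : bform M (u - v) w = bform M u w - bform M v w.
Proof. by rewrite /bform !mulmxBl !mxE. Qed.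

Lemma bformBr M u v w : bform M w (u - v) = bform M w u - bform M w v.
Proof. by rewrite /bform linearB /= mulmxBr !mxE. Qed.

Lemma bform_gt0 M u v :
  (forall k, u 0 k <= 0) -> (forall l, v 0 l <= 0) ->
  (exists k, u 0 k < 0) -> (exists l, v 0 l < 0) ->
  (forall k l, u 0 k < 0 -> v 0 l < 0 -> M k l = 1) -> 0 < bform M u v.
Proof.
move=> u_le0 v_le0 [k uk] [l vl] M1.
have term_ge0 k' l' : 0 <= u 0 k' * M k' l' * v 0 l'.
  have [uk'|uk'] := ltrP (u 0 k') 0; last first.
    have /eqP-> : u 0 k' == 0 by rewrite eq_le u_le0 uk'.
    by rewrite !mul0r.
  have [vl'|vl'] := ltrP (v 0 l') 0; last first.
    have /eqP-> : v 0 l' == 0 by rewrite eq_le v_le0 vl'.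
    by rewrite mulr0.
  by rewrite M1 // mulr1 ltW // nmulr_rgt0.
rewrite bformE; apply: (@sumr_gt0_of R _ _ l) => [l'|]; first exact: sumr_ge0.
by apply: (@sumr_gt0_of R _ _ k) => //; rewrite M1 // mulr1 nmulr_rgt0.
Qed.

End BilinearForm.

Section RegularPolygon.
Variables (R : realType) (n : nat).
Implicit Types (i j k l m : 'I_n) (u v : 'rV[R]_n).

Lemma ord_gt0 i : (0 < n)%N.
Proof. exact: leq_ltn_trans (leq0n i) (ltn_ord i). Qed.

Lemma ell_sinE i j m : ell R i j m =
  -4 * sin (pi * (j%:R - i%:R) / n%:R) * sin (pi * (m%:R - i%:R) / n%:R)
     * sin (pi * (j%:R - m%:R) / n%:R).
Proof.
have n0 : (n%:R : R) != 0 by rewrite pnatr_eq0 -lt0n (ord_gt0 i).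
by rewrite /ell /vx /vy chord_det; congr (_ * sin _ * sin _ * sin _); field.
Qed.

Lemma sin_pi_frac_gt0 (p q : nat) : (q < p < n)%N ->
  0 < sin (pi * (p%:R - q%:R) / n%:R : R).
Proof.
case/andP=> qp pn; have n_gt0 : (0 : R) < n%:R by rewrite ltr0n; lia.
have qpR : (q%:R : R) < p%:R by rewrite ltr_nat.
have pnR : (p%:R : R) < n%:R by rewrite ltr_nat.
apply: sin_gt0_pi; apply/andP; split.
  by rewrite divr_gt0 // mulr_gt0 ?pi_gt0 ?subr_gt0.
have := ler0n R q; rewrite ltr_pdivrMr // ltr_pM2l ?pi_gt0 //; lra.
Qed.

Lemma sgr_sin_pi_frac (p q : 'I_n) :
  Num.sg (sin (pi * (p%:R - q%:R) / n%:R)) = Num.sg (p%:R - q%:R : R).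
Proof.
have [qp|pq|/val_inj ->] := ltngtP q p; last by rewrite !subrr mulr0 mul0r sin0.
- rewrite !gtr0_sg ?subr_gt0 ?ltr_nat //.
  by apply: sin_pi_frac_gt0; rewrite qp ltn_ord.
- rewrite -opprB mulrN mulNr sinN !sgrN !gtr0_sg ?subr_gt0 ?ltr_nat //.
  by apply: sin_pi_frac_gt0; rewrite pq ltn_ord.
Qed.

Lemma sgr_ell i j m : Num.sg (ell R i j m) =
  - Num.sg ((j%:R - i%:R) * ((m%:R - i%:R) * (j%:R - m%:R)) : R).
Proof.
have neg4 : (-4 : R) < 0 by rewrite oppr_lt0.
by rewrite ell_sinE !sgrM !sgr_sin_pi_frac (ltr0_sg neg4) mulN1r !mulNr mulrA.
Qed.

Lemma ell_lt0 i j m : (i < j)%N -> (ell R i j m < 0) = (i < m < j)%N.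
Proof.
move=> ij; rewrite -sgr_lt0 sgr_ell oppr_lt0 sgr_gt0 pmulr_rgt0 ?subr_gt0 ?ltr_nat //.
have [im|mi] := ltnP i m.
  by rewrite pmulr_rgt0 ?subr_gt0 ?ltr_nat.
apply/negbTE; rewrite -leNgt mulr_le0_ge0 // ?subr_le0 ?subr_ge0 ler_nat //.
exact: ltnW (leq_ltn_trans mi ij).
Qed.

Lemma ell_gt0 i j m : (i < j)%N -> (0 < ell R i j m) = (m < i)%N || (j < m)%N.
Proof.
move=> ij; rewrite -sgr_gt0 sgr_ell oppr_gt0 sgr_lt0 pmulr_rlt0 ?subr_gt0 ?ltr_nat //.
have [mi|im|/val_inj ->] := ltngtP m i; last by rewrite subrr mul0r ltxx ltnNge ltnW.
  by rewrite nmulr_rlt0 ?subr_lt0 ?ltr_nat ?subr_gt0 ?ltr_nat // (ltn_trans mi ij).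
by rewrite pmulr_rlt0 ?subr_lt0 ?ltr_nat ?subr_gt0 ?ltr_nat // ltnNge ltnW.
Qed.

Definition copsi i j : 'rV[R]_n := \row_k Num.min (- ell R i j k) 0.

Lemma psi_sub_copsi_affine i j : is_affine (psi R i j - copsi i j).
Proof.
exists ((vy R j - vy R i) * vx R i - (vx R j - vx R i) * vy R i),
  (vy R i - vy R j), (vx R j - vx R i) => k.
have min_sub (x : R) : Num.min x 0 - Num.min (- x) 0 = x.
  have [x_le0|x_gt0] := leP x 0.
    by rewrite min_r ?subr0 // oppr_ge0.
  by rewrite min_l ?sub0r ?opprK // oppr_le0 ltW.
by rewrite !mxE min_sub /ell; ring.
Qed.

Lemma psi_le0 i j m : psi R i j 0 m <= 0.
Proof. by rewrite mxE ge_min lexx orbT. Qed.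

Lemma copsi_le0 i j m : copsi i j 0 m <= 0.
Proof. by rewrite mxE ge_min lexx orbT. Qed.

Lemma psi_lt0 i j m : (i < j)%N -> (psi R i j 0 m < 0) = (i < m < j)%N.
Proof. by move=> ij; rewrite mxE gt_min ltxx orbF ell_lt0. Qed.

Lemma copsi_lt0 i j m : (i < j)%N -> (copsi i j 0 m < 0) = (m < i)%N || (j < m)%N.
Proof. by move=> ij; rewrite mxE gt_min ltxx orbF oppr_lt0 ell_gt0. Qed.

Lemma psi_neg_witness i j : is_diag i j -> exists m, psi R i j 0 m < 0.
Proof.
case/and3P=> ij ji1 _; have m_lt : (i.+1 < n)%N by have := ltn_ord j; lia.
by exists (Ordinal m_lt); rewrite psi_lt0 //=; lia.
Qed.

Lemma copsi_neg_witness i j : is_diag i j -> exists m, copsi i j 0 m < 0.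
Proof.
case/and3P=> ij _ jin; have j_lt := ltn_ord j.
have [i0|i_gt0] := posnP i.
  have m_lt : (n.-1 < n)%N by lia.
  by exists (Ordinal m_lt); rewrite copsi_lt0 //=; lia.
by exists (Ordinal (ord_gt0 i)); rewrite copsi_lt0 //= i_gt0.
Qed.

Lemma cross_of_separating i j k l : (i, j) <> (k, l) ->
  ell R i j k * ell R i j l < 0 -> ell R k l i * ell R k l j < 0 -> cross R i j k l.
Proof.
move=> ijkl sep_kl sep_ij; split => //.
(* [ell R k l] is affine, so along the segment from p_i to p_j it vanishes at the
   parameter t below; symmetrically for s. *)
exists (ell R k l i / (ell R k l i - ell R k l j)), (ell R i j k / (ell R i j k - ell R i j l)).
split; rewrite ?sign_change_ratio_in01 //; apply/eqP; rewrite -subr_eq0; apply/eqP; rewrite /ell;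
  field; rewrite -/(ell R i j k) -/(ell R i j l) -/(ell R k l i) -/(ell R k l j);
  by rewrite !subr_neq0_of_mul_lt0.
Qed.

Lemma interleaved_cross i j k l : (i < k < j)%N -> (j < l)%N ->
  cross R i j k l /\ cross R k l i j.
Proof.
case/andP=> ik kj jl; have ij := ltn_trans ik kj; have kl := ltn_trans kj jl.
have sep_kl : ell R i j k * ell R i j l < 0.
  by rewrite nmulr_rlt0 ?ell_lt0 ?ik // ell_gt0 // jl orbT.
have sep_ij : ell R k l i * ell R k l j < 0.
  by rewrite pmulr_rlt0 ?ell_lt0 ?kj // ell_gt0 // ik.
by split; apply: cross_of_separating => // -[e _]; move: ik; rewrite e ltnn.
Qed.

Lemma noncrossing_cases i j k l : (i < j)%N -> (k < l)%N -> ~ cross R i j k l ->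
  [|| (j <= k) || (l <= i), (k <= i) && (j <= l) | (i <= k) && (l <= j)]%N.
Proof.
move=> ij kl ncr.
have [ikj|] := boolP (i < k < j)%N.
  have [lj|jl] := leqP l j; first lia.
  by case: ncr; case: (interleaved_cross ikj jl).
have [kil|] := boolP (k < i < l)%N.
  have [jl|lj] := leqP j l; first lia.
  by case: ncr; case: (interleaved_cross kil lj).
lia.
Qed.

Definition cos_step : R := cos (2 * pi / n%:R).

Definition sin_step : R := sin (2 * pi / n%:R).

Lemma vxy_ordS k :
  vx R (ordS k) = vx R k * cos_step - vy R k * sin_step /\
  vy R (ordS k) = vy R k * cos_step + vx R k * sin_step.
Proof.
have n0 : (n%:R : R) != 0 by rewrite pnatr_eq0 -lt0n (ord_gt0 k).
suff [-> ->] : vx R (ordS k) = cos (2 * pi * k%:R / n%:R + 2 * pi / n%:R) /\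
               vy R (ordS k) = sin (2 * pi * k%:R / n%:R + 2 * pi / n%:R).
  by rewrite cosD sinD /vx /vy /cos_step /sin_step; split; ring.
rewrite /vx /vy /=; have [kn|kn] := ltnP k.+1 n.
  by rewrite modn_small //; split; congr (_ _); rewrite -natr1; field.
have kn' : k.+1 = n by apply/eqP; rewrite eqn_leq kn ltn_ord.
have -> : 2 * pi * k%:R / n%:R + 2 * pi / n%:R = pi *+ 2 :> R.
  have nk : (n%:R : R) = k.+1%:R by rewrite kn'.
  by rewrite nk -natr1 mulr2n in n0 *; field.
by rewrite kn' modnn mulr0 mul0r cos2pi sin2pi cos0 sin0.
Qed.

Lemma vxy_neighbours l :
  vx R (ord_pred l) + vx R (ordS l) = 2 * cos_step * vx R l /\
  vy R (ord_pred l) + vy R (ordS l) = 2 * cos_step * vy R l.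
Proof.
have cs : cos_step ^+ 2 + sin_step ^+ 2 = 1 by exact: cos2Dsin2.
have [x1 y1] := vxy_ordS (ord_pred l); rewrite ord_predK in x1 y1.
have [x2 y2] := vxy_ordS l; rewrite x2 y2 x1 y1.
by split; rewrite -[X in X + _ = _]mulr1 -{1}cs; ring.
Qed.

(* For affine f with constant term f0, summing over the vertices gives n f0 and
   f (ord_pred l) + f (ordS l) = 2 cos_step f l + 2 (1 - cos_step) f0; the two
   coefficients below are exactly the ones cancelling both contributions in
   (f *m gram) l. *)
Definition gram_diag : R := n%:R * cos_step / (1 - cos_step).

Definition gram_adj : R := - n%:R / (2 * (1 - cos_step)).

Definition gram : 'M[R]_n := \matrix_(k, l)
  (1 + gram_diag * (k == l)%:R + gram_adj * ((l == ordS k)%:R + (k == ordS l)%:R)).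

Lemma gram_sym : gram^T = gram.
Proof. by apply/matrixP => k l; rewrite !mxE [l == k]eq_sym [_%:R + _]addrC. Qed.

Definition apart m m' : bool :=
  [|| (m + 2 <= m' <= m + n - 2)%N | (m' + 2 <= m <= m' + n - 2)%N].

Lemma gram_apart m m' : apart m m' -> gram m m' = 1.
Proof.
have m_lt := ltn_ord m; have m'_lt := ltn_ord m'.
rewrite /apart mxE => mm'.
have -> : (m == m') = false by apply/negbTE; rewrite -val_eqE /=; lia.
have -> : (m' == ordS m) = false.
  apply/negbTE; rewrite -val_eqE /=.
  by case: (ltngtP m.+1 n) => [?|?|e]; rewrite ?e ?modnn ?modn_small //; lia.
have -> : (m == ordS m') = false.
  apply/negbTE; rewrite -val_eqE /=.
  by case: (ltngtP m'.+1 n) => [?|?|e]; rewrite ?e ?modnn ?modn_small //; lia.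
by rewrite /= !(mulr0, addr0).
Qed.

Lemma bform_gram_gt0 u v :
  (forall m, u 0 m <= 0) -> (forall m, v 0 m <= 0) ->
  (exists m, u 0 m < 0) -> (exists m, v 0 m < 0) ->
  (forall m m', u 0 m < 0 -> v 0 m' < 0 -> apart m m') -> 0 < bform gram u v.
Proof.
move=> u_le0 v_le0 u_neg v_neg uv_apart.
by apply: bform_gt0 => // m m' um vm'; rewrite gram_apart ?uv_apart.
Qed.

Section AffineKernel.
Hypothesis n_gt1 : (1 < n)%N.

Lemma cos_step_lt1 : cos_step < 1.
Proof.
have s_gt0 := @sin_pi_frac_gt0 1 0 n_gt1.
rewrite subr0 mulr1 in s_gt0.
rewrite /cos_step (_ : 2 * pi / n%:R = pi / n%:R + pi / n%:R); last by ring.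
by rewrite cosD -!expr2 cos2sin2; nra.
Qed.

Lemma sum_vx_vy : \sum_(k < n) vx R k = 0 /\ \sum_(k < n) vy R k = 0.
Proof.
apply: (@rotation_fixed_eq0 R cos_step sin_step _ _ cos_step_lt1).
  rewrite {1}(reindex_inj (@ordS_inj n)) /=.
  by under eq_bigr do rewrite (vxy_ordS _).1; rewrite sumrB -!mulr_suml.
rewrite {1}(reindex_inj (@ordS_inj n)) /=.
by under eq_bigr do rewrite (vxy_ordS _).2; rewrite big_split -!mulr_suml.
Qed.

Lemma affine_mul_gram (a : 'rV[R]_n) : is_affine a -> a *m gram = 0.
Proof.
move=> [c0 [c1 [c2 a_aff]]]; apply/rowP => l; rewrite !mxE.
have expand k : a 0 k * gram k l = a 0 k + gram_diag * (a 0 k * (k == l)%:R)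
    + gram_adj * (a 0 k * (k == ord_pred l)%:R) + gram_adj * (a 0 k * (k == ordS l)%:R).
  by rewrite mxE [l == ordS k]eq_sym (can2_eq (@ordSK n) (@ord_predK n)); ring.
rewrite (eq_bigr _ (fun k _ => expand k)) !big_split /= -!mulr_sumr !sum_mul_delta.
under eq_bigr do rewrite a_aff.
rewrite !big_split /= -!mulr_sumr sumr_const card_ord -mulr_natr !a_aff.
have [-> ->] := sum_vx_vy; have [nx ny] := vxy_neighbours l.
have -> : vx R (ord_pred l) = 2 * cos_step * vx R l - vx R (ordS l) by rewrite -nx; ring.
have -> : vy R (ord_pred l) = 2 * cos_step * vy R l - vy R (ordS l) by rewrite -ny; ring.
have c_neq1 : 1 - cos_step != 0 by rewrite subr_eq0 eq_sym lt_eqF ?cos_step_lt1.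
by rewrite /gram_diag /gram_adj; field.
Qed.

Lemma bform_gram_affine (a : 'rV[R]_n) : is_affine a ->
  forall f, bform gram a f = 0 /\ bform gram f a = 0.
Proof.
move=> /affine_mul_gram a0 f; split; first by rewrite /bform a0 mul0mx mxE.
by rewrite /bform -mulmxA -{1}gram_sym -trmx_mul a0 trmx0 mulmx0 mxE.
Qed.

Lemma bform_gram_copsil i j u : bform gram (copsi i j) u = bform gram (psi R i j) u.
Proof.
have [+ _] := bform_gram_affine (psi_sub_copsi_affine i j) u.
by rewrite bformBl => /subr0_eq.
Qed.

Lemma bform_gram_copsir i j u : bform gram u (copsi i j) = bform gram u (psi R i j).
Proof.
have [_ +] := bform_gram_affine (psi_sub_copsi_affine i j) u.
by rewrite bformBr => /subr0_eq.
Qed.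

End AffineKernel.

End RegularPolygon.

Theorem lemma2p7 (R : realType) (n : nat) (hn : (4 <= n)%N) :
  exists M : 'M[R]_n,
    [/\ M^T = M,
        (forall a : 'rV[R]_n, is_affine (R:=R) a ->
           forall f : 'rV[R]_n, bform M a f = 0 /\ bform M f a = 0) &
        (forall i j k l : 'I_n, @is_diag n i j -> @is_diag n k l -> ~ @cross R n i j k l ->
           0 < bform M (@psi R n i j) (@psi R n k l))].
Proof.
have n_gt1 : (1 < n)%N by lia.
exists (gram R n); split; first exact: gram_sym.
  by move=> a a_aff; apply: bform_gram_affine.
move=> i j k l dij dkl ncr; have [ij _ _] := and3P dij; have [kl _ _] := and3P dkl.
move: (ltn_ord i) (ltn_ord j) (ltn_ord k) (ltn_ord l) => ? ? ? ?.
case/or3P: (noncrossing_cases ij kl ncr) => [disjoint|nested|nested].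
- apply: bform_gram_gt0 (@psi_le0 _ _ i j) (@psi_le0 _ _ k l)
    (psi_neg_witness R dij) (psi_neg_witness R dkl) _ => m m'.
  by rewrite !psi_lt0 // /apart; have := ltn_ord m; have := ltn_ord m'; lia.
- rewrite -(bform_gram_copsir n_gt1).
  apply: bform_gram_gt0 (@psi_le0 _ _ i j) (@copsi_le0 _ _ k l)
    (psi_neg_witness R dij) (copsi_neg_witness R dkl) _ => m m'.
  by rewrite psi_lt0 // copsi_lt0 // /apart; have := ltn_ord m; have := ltn_ord m'; lia.
- rewrite -(bform_gram_copsil n_gt1).
  apply: bform_gram_gt0 (@copsi_le0 _ _ i j) (@psi_le0 _ _ k l)
    (copsi_neg_witness R dij) (psi_neg_witness R dkl) _ => m m'.
  by rewrite copsi_lt0 // psi_lt0 // /apart; have := ltn_ord m; have := ltn_ord m'; lia.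
Qed.
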